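(* Let $q=2^r$ with $r\ge 4$ (so $q=4k$ with $k=2^{r-2}$, $r-2\ge 2$). Let $G_1,G_2,G_3\subseteq\mathfrak S_q$ be the groups defined below, and for $s=1,2,3$ let $f_s\in\mathbb F_q[X,Y]$ be a local permutation polynomial whose permutation polynomial tuple consists of the $q$ elements of $G_s$ (in some order). Then, for every $0\le e<r$, none of $f_1,f_2,f_3$ is equivalent to an $e$-Klenian polynomial over $\mathbb F_q$, and $f_1,f_2,f_3$ are pairwise inequivalent.
   Context: The elements of $\mathbb F_q$ are enumerated as $\mathbb F_q=\{c_0,\dots,c_{q-1}\}$; $\mathfrak S_q$ is the symmetric group of permutations of $\mathbb F_q$, composed right to left, $(\sigma\tau)(x)=\sigma(\tau(x))$, written in cycle notation. LPPs and tuples: every function $\mathbb F_q^2\to\mathbb F_q$ is identified with the unique polynomial in $\mathbb F_q[X,Y]$ of degree $<q$ in each variable representing it. $f\in\mathbb F_q[X,Y]$ is a local permutation polynomial (LPP) if $x\mapsto f(x,y_0)$ and $y\mapsto f(x_0,y)$ are permutations of $\mathbb F_q$ for all $x_0,y_0\in\mathbb F_q$. A permutation polynomial tuple is $(\beta_0,\dots,\beta_{q-1})\in\mathfrak S_q^q$ such that $\beta_i^{-1}\beta_j$ has no fixed point whenever $i\neq j$. LPPs $f$ correspond bijectively to permutation polynomial tuples $\underline\beta_f=(\beta_0,\dots,\beta_{q-1})$ via $f(x,\beta_i(x))=c_i$ for all $x\in\mathbb F_q$ and all $0\le i\le q-1$. Two LPPs $f,g$ with tuples $(\beta_0,\dots,\beta_{q-1})$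 and $(\gamma_0,\dots,\gamma_{q-1})$ are equivalent if there exist $\sigma,\lambda\in\mathfrak S_q$ with $\gamma_i=\sigma\beta_i\lambda$ for all $i$. $e$-Klenian polynomials: for $q=p^r$ ($p$ prime), $0\le e<r$, $\ell=p^e$, $t=q/\ell$, let $\alpha=\prod_{i=0}^{t-1}(c_{i\ell},c_{i\ell+1},\dots,c_{(i+1)\ell-1})$ and $\beta=\prod_{j=0}^{\ell-1}(c_j,c_{j+\ell},\dots,c_{j+(t-1)\ell})$, and $G=\{\alpha^i\beta^j:0\le i\le\ell-1,0\le j\le t-1\}$ (a subgroup of $\mathfrak S_q$ of order $q$ whose non-identity elements have no fixed points). An $e$-Klenian polynomial is an LPP whose permutation polynomial tuple consists of the $q$ elements of $G$ in some order. The groups: with $k=q/4$, let $a=(c_0,c_1)(c_2,c_3)\cdots(c_{q-2},c_{q-1})$ in all three cases. $G_1=\{b_1^ja^i:0\le j\le 2k-1,0\le i\le1\}$ where $b_1=C_1C_2$, $C_1$ the cycle with entries in order: for $m=0,\dots,\frac{k-2}{2}$ the pair $c_{2m},c_{2(2m+k-1)}$; then for $n=0,\dots,\frac{k-4}{2}$ the pair $c_{2n+k},c_{2(2n+k)}$; then $c_{4k-1},c_{4k-4}$; and $C_2$ the cycle with entries in order: for $m=0,\dots,\frac{k-2}{2}$ the pair $c_{2m+1},c_{2(2m+k)+1}$; then for $n=0,\dots,\frac{k-4}{2}$ the pair $c_{2n+k+1},c_{2(2n+k)-1}$; then $c_{4k-2},c_{4k-5}$. $G_2=\{b_2^ja^i:0\le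 j\le \frac q2-1,0\le i\le1\}$ where $b_2=(c_{\frac q2-2},c_{\frac q2-4},\dots,c_2,c_0,c_{\frac q2},c_{\frac q2+2},\dots,c_{q-2})(c_1,c_3,\dots,c_{\frac q2-1},c_{q-1},c_{q-3},\dots,c_{\frac q2+1})$. $G_3=\{b_3^ja^i:0\le j\le 2k-1,0\le i\le1\}$ where $b_3=D_1D_2$, $D_1$ the cycle with entries in order: for $i=0,\dots,\frac{k-2}{2}$ the pair $c_{2i},c_{2i+2k+1}$; then $c_{k+1},c_{3k}$; then for $j=0,\dots,\frac{k-4}{2}$ the pair $c_{k+2j+2},c_{3k+2j+2}$; and $D_2$ the cycle with entries in order: for $j=0,\dots,\frac{k-4}{2}$ the pair $c_{3k-2-2j},c_{2k-1-2j}$; then $c_{2k},c_k$; then for $i=0,\dots,\frac{k-2}{2}$ the pair $c_{4k-1-2i},c_{k-1-2i}$. Each $G_s$ is a subgroup of $\mathfrak S_q$ of order $q$ whose non-identity elements have no fixed points. *)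

From mathcomp Require Import all_boot all_order all_algebra all_fingroup.
Set Implicit Arguments. Unset Strict Implicit. Unset Printing Implicit Defensive.

(* Elements of F_q are c_0,...,c_{q-1}; permutations of F_q are described
   through permutations of the indices 0..q-1 (functions nat -> nat). *)

Definition cyc (s : seq nat) (n : nat) : nat :=
  if n \in s then nth 0 s ((index n s).+1 %% size s) else n.

Definition cycles (cs : seq (seq nat)) : nat -> nat :=
  foldr (fun s g => cyc s \o g) id cs.

Definition perm_a (q : nat) : nat -> nat :=
  cycles [seq [:: 2 * m; 2 * m + 1] | m <- iota 0 (q %/ 2)].

Definition cycle_C1 (k : nat) : seq nat :=
  flatten [seq [:: 2 * m; 2 * (2 * m + k - 1)] | m <- iota 0 (k %/ 2)]
  ++ flatten [seq [:: 2 * n + k; 2 * (2 * n + k)] | n <- iota 0 (k %/ 2 - 1)]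
  ++ [:: 4 * k - 1; 4 * k - 4].
Definition cycle_C2 (k : nat) : seq nat :=
  flatten [seq [:: 2 * m + 1; 2 * (2 * m + k) + 1] | m <- iota 0 (k %/ 2)]
  ++ flatten [seq [:: 2 * n + k + 1; 2 * (2 * n + k) - 1] | n <- iota 0 (k %/ 2 - 1)]
  ++ [:: 4 * k - 2; 4 * k - 5].
Definition perm_b1 (q : nat) : nat -> nat :=
  cycles [:: cycle_C1 (q %/ 4); cycle_C2 (q %/ 4)].

Definition perm_b2 (q : nat) : nat -> nat :=
  cycles [:: rev [seq 2 * m | m <- iota 0 (q %/ 4)]
              ++ [seq q %/ 2 + 2 * m | m <- iota 0 (q %/ 4)];
             [seq 2 * m + 1 | m <- iota 0 (q %/ 4)]
              ++ rev [seq q %/ 2 + 1 + 2 * m | m <- iota 0 (q %/ 4)]].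

Definition cycle_D1 (k : nat) : seq nat :=
  flatten [seq [:: 2 * i; 2 * i + 2 * k + 1] | i <- iota 0 (k %/ 2)]
  ++ [:: k + 1; 3 * k]
  ++ flatten [seq [:: k + 2 * j + 2; 3 * k + 2 * j + 2] | j <- iota 0 (k %/ 2 - 1)].
Definition cycle_D2 (k : nat) : seq nat :=
  flatten [seq [:: 3 * k - 2 - 2 * j; 2 * k - 1 - 2 * j] | j <- iota 0 (k %/ 2 - 1)]
  ++ [:: 2 * k; k]
  ++ flatten [seq [:: 4 * k - 1 - 2 * i; k - 1 - 2 * i] | i <- iota 0 (k %/ 2)].
Definition perm_b3 (q : nat) : nat -> nat :=
  cycles [:: cycle_D1 (q %/ 4); cycle_D2 (q %/ 4)].

(* G_s = { b_s^j a^i : 0 <= j < q/2, 0 <= i < 2 }  (b^j a^i : apply a^i first) *)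
Definition Gs_elt (b : nat -> nat) (q : nat) (j i : nat) : nat -> nat :=
  fun n => iter j b (iter i (perm_a q) n).

(* e-Klenian: l = 2^e (p = 2 here; stated for general p via l), t = q / l *)
Definition perm_alpha (q l : nat) : nat -> nat :=
  cycles [seq iota (i * l) l | i <- iota 0 (q %/ l)].
Definition perm_beta (q l : nat) : nat -> nat :=
  cycles [seq [seq j + m * l | m <- iota 0 (q %/ l)] | j <- iota 0 l].
Definition Klein_elt (q l : nat) (i j : nat) : nat -> nat :=
  fun n => iter i (perm_alpha q l) (iter j (perm_beta q l) n).

Section LPP.
Variables (q : nat) (F : finFieldType) (c : 'I_q -> F) (d : F -> 'I_q).

(* functions F^2 -> F are identified with their reduced polynomials *)
Definition is_LPP (f : F -> F -> F) : Prop :=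
  (forall y, bijective (fun x => f x y)) /\ (forall x, bijective (f x)).

Definition tuple_of (f : F -> F -> F) (beta : 'I_q -> {perm F}) : Prop :=
  forall i x, f x (beta i x) = c i.

(* g : {perm F} is the permutation c_n |-> c_{P n} (d is the inverse of c) *)
Definition represents (g : {perm F}) (P : nat -> nat) : Prop :=
  forall x, nat_of_ord (d (g x)) = P (nat_of_ord (d x)).

Definition consists_of (beta : 'I_q -> {perm F})
    (elt : nat -> nat -> nat -> nat) (n1 n2 : nat) : Prop :=
  (forall i, exists u v, [/\ u < n1, v < n2 & represents (beta i) (elt u v)])
  /\ (forall u v, u < n1 -> v < n2 -> exists i, represents (beta i) (elt u v)).

Definition LPP_equiv (f g : F -> F -> F) : Prop :=
  exists (beta gamma : 'I_q -> {perm F}) (sigma lambda : {perm F}),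
    [/\ tuple_of f beta, tuple_of g gamma &
        forall i x, gamma i x = sigma (beta i (lambda x))].

Definition is_eKlenian (e : nat) (g : F -> F -> F) : Prop :=
  is_LPP g /\ exists beta, tuple_of g beta /\
    consists_of beta (Klein_elt q (2 ^ e)) (2 ^ e) (q %/ 2 ^ e).

Definition is_Gs_poly (b : nat -> nat) (f : F -> F -> F) : Prop :=
  is_LPP f /\ exists beta, tuple_of f beta /\
    consists_of beta (Gs_elt b q) (q %/ 2) 2.
End LPP.

From Pilot Require Import Defs.
From mathcomp Require Import all_boot all_order all_algebra all_fingroup cyclic zify.
Set Implicit Arguments. Unset Strict Implicit. Unset Printing Implicit Defensive.

(* Each G_s is generated by the involution a and by b_s, a product of two
   disjoint (q/2)-cycles that a interchanges, with a b_s a = b_s^m_s where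
   m_1 = q/4 + 1, m_2 = q/2 - 1 and m_3 = q/4 - 1.  If two LPPs with tuples
   (beta_i) and (gamma_i) are equivalent, gamma_i = lambda beta_i sigma, then
   choosing j with gamma_j = 1 gives gamma_i = (beta_i beta_j^-1)^(lambda^-1):
   the second group is conjugate to the first.  Three conjugation-invariant
   properties separate the groups.  e-Klenian groups are abelian, G_s is not
   (m_s <> 1 mod q/2).  Squares are central in G_1 (m_1 is odd and 2 m_1 = 2
   mod q/2), whereas a does not commute with b_s^2 for s = 2, 3.  In the
   dihedral group G_2, for all x and y either x^2 = 1, y^2 = 1 or xy = yx;
   this fails in G_3 for x = a b_3 and y = b_3. *)

(** * Cycle notation *)

Lemma cyc_id s n : n \notin s -> cyc s n = n.
Proof. by rewrite /cyc => /negbTE ->. Qed.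

Lemma cyc_nth s i : uniq s -> i < size s ->
  cyc s (nth 0 s i) = nth 0 s (i.+1 %% size s).
Proof. by move=> s_uniq lt_i; rewrite /cyc mem_nth // index_uniq. Qed.

Lemma cycles_cat (cs1 cs2 : seq (seq nat)) n : cycles (cs1 ++ cs2) n = cycles cs1 (cycles cs2 n).
Proof. by rewrite /cycles foldr_cat; elim: cs1 => //= C cs1 ->. Qed.

Lemma cycles_id (cs : seq (seq nat)) n : (forall C, C \in cs -> n \notin C) -> cycles cs n = n.
Proof.
elim: cs => //= C cs IH n_out.
rewrite IH ?cyc_id ?n_out ?mem_head // => C' C'_in.
by apply: n_out; rewrite in_cons C'_in orbT.
Qed.

Lemma cycles_map_iota (s : nat -> seq nat) N x n : x < N -> n \in s x ->
  (forall y, y < N -> y != x -> n \notin s y /\ cyc (s x) n \notin s y) ->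
  cycles [seq s y | y <- iota 0 N] n = cyc (s x) n.
Proof.
elim: N => // N IH lt_x n_in disj.
rewrite -addn1 iotaD map_cat cycles_cat /= add0n.
have [lt_xN | le_Nx] := ltnP x N.
  rewrite cyc_id; last by case: (disj N (leqnn _)); rewrite // neq_ltn lt_xN orbT.
  by apply: IH => // y lt_y ne_yx; apply: disj => //; exact: ltnW.
have {le_Nx lt_x} eq_xN : x = N by lia.
subst x.
rewrite cycles_id // => C /mapP [y]; rewrite mem_iota add0n => /andP [_ lt_y] ->.
have lt_yN : y < N.+1 by lia.
have ne_yN : y != N by lia.
by case: (disj y lt_yN ne_yN).
Qed.

Definition pair_swap (N n : nat) := if n < 2 * N then (if odd n then n.-1 else n.+1) else n.

Lemma pair_swapK N : involutive (pair_swap N).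
Proof.
move=> n; have [v def_v] : exists v, pair_swap N n = v by eexists.
by rewrite def_v; move: def_v; rewrite /pair_swap; repeat case: ifP => ?; lia.
Qed.

Lemma cyc_pair m n : n./2 = m -> cyc [:: 2 * m; 2 * m + 1] n = if odd n then n.-1 else n.+1.
Proof.
move=> half_n; rewrite /cyc !inE /=.
by case: (boolP (odd n)) => odd_n; repeat case: eqP => ? /=; lia.
Qed.

Lemma perm_aE N : perm_a (2 * N) =1 pair_swap N.
Proof.
move=> n; rewrite /perm_a /pair_swap mulKn //.
have [lt_n | ge_n] := ltnP.
  rewrite (@cycles_map_iota (fun m => [:: 2 * m; 2 * m + 1]) N n./2 n); first exact: cyc_pair.
  - lia.
  - by rewrite !inE; apply/orP; case: (boolP (odd n)) => ?; [right | left]; apply/eqP; lia.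
  move=> y lt_y ne_y; rewrite (cyc_pair (erefl _)) !inE.
  by case: (boolP (odd n)) => ?; split; apply/negP; case/orP => /eqP; lia.
rewrite cycles_id // => C /mapP [y]; rewrite mem_iota => /andP [_ lt_y] ->.
by rewrite !inE; apply/negP; case/orP => /eqP; lia.
Qed.

(** * Two cycles interchanged by an involution *)

(* The witness [n < 2 * L] is an index of F_q when q = 2 L. *)
Definition metacyclic_relations (a b : nat -> nat) (m L : nat) : Prop :=
  [/\ involutive a, forall n, a (b (a n)) = iter m b n, forall n, iter L b n = n &
      forall t, 0 < t < L -> exists2 n, n < 2 * L & iter t b n != n].

Section Bicycle.
Variables (P1 P2 : nat -> nat) (L : nat).
Hypothesis L_gt0 : 0 < L.
Hypothesis P_uniq : uniq (mkseq P1 L ++ mkseq P2 L).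
Hypothesis P_bound : forall i, i < L -> P1 i < 2 * L /\ P2 i < 2 * L.

Definition bicycle n := cyc (mkseq P1 L) (cyc (mkseq P2 L) n).

Let P1_uniq : uniq (mkseq P1 L). Proof. by move: P_uniq; rewrite cat_uniq => /and3P []. Qed.
Let P2_uniq : uniq (mkseq P2 L). Proof. by move: P_uniq; rewrite cat_uniq => /and3P []. Qed.

Let P1_notin_P2 x : x \in mkseq P1 L -> x \notin mkseq P2 L.
Proof.
move=> x1; move: P_uniq; rewrite cat_uniq => /and3P [_ /hasPn P12 _].
by apply/negP => x2; move: (P12 x x2); rewrite x1.
Qed.

Let mem_P1 i : i < L -> P1 i \in mkseq P1 L.
Proof. by move=> lt_i; rewrite -(nth_mkseq 0 P1 lt_i) mem_nth // size_mkseq. Qed.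
Let mem_P2 i : i < L -> P2 i \in mkseq P2 L.
Proof. by move=> lt_i; rewrite -(nth_mkseq 0 P2 lt_i) mem_nth // size_mkseq. Qed.

Lemma bicycle_P1 i : i < L -> bicycle (P1 i) = P1 (i.+1 %% L).
Proof.
move=> lt_i; rewrite /bicycle (@cyc_id (mkseq P2 L)); last exact: P1_notin_P2 (mem_P1 lt_i).
by rewrite -{1}(nth_mkseq 0 P1 lt_i) cyc_nth ?size_mkseq // nth_mkseq // ltn_mod.
Qed.

Lemma bicycle_P2 i : i < L -> bicycle (P2 i) = P2 (i.+1 %% L).
Proof.
move=> lt_i; rewrite /bicycle -{1}(nth_mkseq 0 P2 lt_i) cyc_nth ?size_mkseq //.
rewrite nth_mkseq ?ltn_mod // cyc_id //.
by apply/negP => /P1_notin_P2; rewrite mem_P2 // ltn_mod.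
Qed.

Lemma iter_bicycle_P1 j i : i < L -> iter j bicycle (P1 i) = P1 ((i + j) %% L).
Proof.
move=> lt_i; elim: j => [|j IH]; first by rewrite addn0 modn_small.
by rewrite iterS IH bicycle_P1 ?ltn_mod // -addn1 modnDml addn1 addnS.
Qed.

Lemma iter_bicycle_P2 j i : i < L -> iter j bicycle (P2 i) = P2 ((i + j) %% L).
Proof.
move=> lt_i; elim: j => [|j IH]; first by rewrite addn0 modn_small.
by rewrite iterS IH bicycle_P2 ?ltn_mod // -addn1 modnDml addn1 addnS.
Qed.

Let notin_P_large n : 2 * L <= n -> n \notin mkseq P1 L /\ n \notin mkseq P2 L.
Proof.
move=> ge_n; split; apply/negP => /mapP [i]; rewrite mem_iota => /andP [_ lt_i] def_n;
  case: (P_bound lt_i); lia.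
Qed.

Lemma bicycle_large n : 2 * L <= n -> bicycle n = n.
Proof. by move=> /notin_P_large [n1 n2]; rewrite /bicycle !cyc_id. Qed.

Lemma iter_bicycle_large j n : 2 * L <= n -> iter j bicycle n = n.
Proof. by move=> ge_n; elim: j => // j IH; rewrite iterS IH bicycle_large. Qed.

Lemma bicycle_cover n : n < 2 * L ->
  (exists2 i, i < L & n = P1 i) \/ (exists2 i, i < L & n = P2 i).
Proof.
move=> lt_n.
have sub : {subset mkseq P1 L ++ mkseq P2 L <= iota 0 (2 * L)}.
  move=> x; rewrite mem_cat mem_iota add0n => /orP [] /mapP [i];
    by rewrite mem_iota => /andP [_ /P_bound[]] ? ? ->.
have [|_ eq_P] := uniq_min_size P_uniq sub.
  by rewrite size_cat !size_mkseq size_iota; lia.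
have : n \in mkseq P1 L ++ mkseq P2 L by rewrite eq_P mem_iota.
rewrite mem_cat => /orP [] /mapP [i]; rewrite mem_iota => /andP [_ lt_i] ->.
- by left; exists i.
- by right; exists i.
Qed.

Lemma iter_bicycle_order n : iter L bicycle n = n.
Proof.
have [lt_n | ge_n] := ltnP n (2 * L); last exact: iter_bicycle_large.
case: (bicycle_cover lt_n) => [] [i lt_i ->];
  by rewrite (iter_bicycle_P1, iter_bicycle_P2) // modnDr modn_small.
Qed.

Lemma iter_bicycle_neq t : 0 < t < L -> iter t bicycle (P1 0) != P1 0.
Proof.
case/andP=> t_gt0 lt_t; rewrite iter_bicycle_P1 // add0n modn_small //.
rewrite -(nth_mkseq 0 P1 lt_t) -(nth_mkseq 0 P1 L_gt0) nth_uniq ?size_mkseq //.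
by rewrite -lt0n.
Qed.

Lemma iter_bicycle_mod x n : iter x bicycle n = iter (x %% L) bicycle n.
Proof.
rewrite {1}(divn_eq x L) iterD; move: (iter _ _ n) => y.
by elim: (x %/ L) => // k IH; rewrite mulSn iterD IH iter_bicycle_order.
Qed.

Variables (a : nat -> nat) (m c : nat).
Hypothesis a_P1 : forall i, i < L -> a (P1 i) = P2 ((c + m * i) %% L).
Hypothesis aK : involutive a.
Hypothesis a_large : forall n, 2 * L <= n -> a n = n.
Hypothesis m2_mod : m * m = 1 %[mod L].

Let mulm2D x y : m * m * x + y = x + y %[mod L].
Proof. by rewrite -modnDml -modnMml m2_mod modnMml mul1n modnDml. Qed.

Let a_iter_P1 i : a (iter i bicycle (P1 0)) = iter (c + m * i) bicycle (P2 0).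
Proof.
rewrite iter_bicycle_P1 // add0n a_P1 ?ltn_mod // iter_bicycle_mod.
by rewrite iter_bicycle_P2 // add0n modn_mod -modnDmr modnMmr modnDmr.
Qed.

(* [(L - 1) * c] stands for [- c] modulo [L]. *)
Let a_iter_P2 i : a (iter i bicycle (P2 0)) = iter (m * (i + (L - 1) * c)) bicycle (P1 0).
Proof.
apply: (canLR aK); rewrite a_iter_P1 iter_bicycle_mod [in RHS]iter_bicycle_mod; congr iter.
have -> : c + m * (m * (i + (L - 1) * c)) = m * m * (i + (L - 1) * c) + c by nia.
by rewrite mulm2D -addnA -{2}(mul1n c) -mulnDl subnK // addnC mulnC modnMDl.
Qed.

Lemma bicycle_conj n : a (bicycle (a n)) = iter m bicycle n.
Proof.
have [lt_n | ge_n] := ltnP n (2 * L); last first.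
  by rewrite !a_large ?bicycle_large ?iter_bicycle_large.
case: (bicycle_cover lt_n) => [] [i lt_i ->].
- have -> : P1 i = iter i bicycle (P1 0) by rewrite iter_bicycle_P1 // modn_small.
  rewrite a_iter_P1 -iterS a_iter_P2 -iterD iter_bicycle_mod [in RHS]iter_bicycle_mod.
  congr iter.
  have -> : m * ((c + m * i).+1 + (L - 1) * c) = m * m * i + (m * c * L + m) by nia.
  by rewrite mulm2D addnCA modnMDl addnC.
- have -> : P2 i = iter i bicycle (P2 0) by rewrite iter_bicycle_P2 // modn_small.
  rewrite a_iter_P2 -iterS a_iter_P1 -iterD iter_bicycle_mod [in RHS]iter_bicycle_mod.
  congr iter.
  have -> : c + m * (m * (i + (L - 1) * c)).+1 = m * m * (i + (L - 1) * c) + (c + m) by nia.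
  rewrite mulm2D; have -> : i + (L - 1) * c + (c + m) = c * L + (m + i) by nia.
  by rewrite modnMDl.
Qed.

Lemma bicycle_metacyclic : metacyclic_relations a bicycle m L.
Proof.
split => //; [exact: bicycle_conj | exact: iter_bicycle_order |].
move=> t lt_t; exists (P1 0); last exact: iter_bicycle_neq.
by case: (P_bound L_gt0).
Qed.

End Bicycle.

Lemma eq_metacyclic_relations a b b' m L :
  b =1 b' -> metacyclic_relations a b m L -> metacyclic_relations a b' m L.
Proof.
move=> eq_b [aK conj_b order_b neq_b]; have eq_iter_b := eq_iter eq_b.
split=> [// | n | n | t /neq_b [n lt_n]].
- by rewrite -eq_b -eq_iter_b conj_b.
- by rewrite -eq_iter_b order_b.
- by exists n; rewrite // -eq_iter_b.
Qed.

Lemma cat_mkseq_uniq (P1 P2 : nat -> nat) L :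
  (forall i, i < L -> P1 i < 2 * L /\ P2 i < 2 * L) ->
  (forall n, n < 2 * L -> (exists2 i, i < L & P1 i = n) \/ (exists2 i, i < L & P2 i = n)) ->
  uniq (mkseq P1 L ++ mkseq P2 L).
Proof.
move=> P_bound P_cover; apply: (@leq_size_uniq _ (iota 0 (2 * L))); first exact: iota_uniq.
  move=> n; rewrite mem_iota add0n mem_cat => /andP [_ /P_cover] [] [i lt_i <-].
  - by apply/orP; left; apply/mapP; exists i; rewrite // mem_iota.
  - by apply/orP; right; apply/mapP; exists i; rewrite // mem_iota.
by rewrite size_cat !size_mkseq size_iota; lia.
Qed.

Lemma pair_swap_bicycle_metacyclic P1 P2 L m c : 0 < L ->
  (forall i, i < L -> P1 i < 2 * L /\ P2 i < 2 * L) ->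
  (forall n, n < 2 * L -> (exists2 i, i < L & P1 i = n) \/ (exists2 i, i < L & P2 i = n)) ->
  (forall i, i < L -> pair_swap L (P1 i) = P2 ((c + m * i) %% L)) -> m * m = 1 %[mod L] ->
  metacyclic_relations (perm_a (2 * L)) (bicycle P1 P2 L) m L.
Proof.
move=> L_gt0 P_bound P_cover swap_P1 m2.
apply: (@bicycle_metacyclic _ _ _ L_gt0 (cat_mkseq_uniq P_bound P_cover) P_bound _ m c) => //.
- by move=> i lt_i; rewrite perm_aE swap_P1.
- by move=> n; rewrite !perm_aE pair_swapK.
- by move=> n ge_n; rewrite perm_aE /pair_swap ltnNge ge_n.
Qed.

(** * The generators b_1, b_2 and b_3 *)

Definition pairs (f g : nat -> nat) (i0 N : nat) := flatten [seq [:: f m; g m] | m <- iota i0 N].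

Lemma size_pairs f g i0 N : size (pairs f g i0 N) = 2 * N.
Proof. by elim: N i0 => // N IH i0; rewrite /pairs /= IH; lia. Qed.

Lemma nth_pairs f g i0 N i : i < 2 * N ->
  nth 0 (pairs f g i0 N) i = if odd i then g (i0 + i./2) else f (i0 + i./2).
Proof.
elim: N i0 i => [|N IH] i0 i lt_i; first lia.
case: i lt_i => [|[|i]] lt_i; rewrite /= ?addn0 //.
by rewrite -/(pairs f g i0.+1 N) IH; [rewrite negbK !addSnnS | lia].
Qed.

Definition pairs_cat_entry (f1 g1 f2 g2 : nat -> nat) (N1 N2 x y i : nat) :=
  if i < 2 * N1 then (if odd i then g1 i./2 else f1 i./2)
  else if i < 2 * N1 + 2 * N2 then
    (if odd (i - 2 * N1) then g2 (i - 2 * N1)./2 else f2 (i - 2 * N1)./2)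
  else if i == 2 * N1 + 2 * N2 then x else y.

Lemma mkseq_pairs_cat_entry f1 g1 f2 g2 N1 N2 x y :
  pairs f1 g1 0 N1 ++ pairs f2 g2 0 N2 ++ [:: x; y] =
  mkseq (pairs_cat_entry f1 g1 f2 g2 N1 N2 x y) (2 * N1 + 2 * N2 + 2).
Proof.
apply: (@eq_from_nth _ 0); first by rewrite size_mkseq !size_cat !size_pairs /=; lia.
move=> i; rewrite !size_cat !size_pairs /= => lt_i.
rewrite nth_mkseq; last lia.
rewrite /pairs_cat_entry nth_cat size_pairs.
case: ifP => i_N1; first by rewrite nth_pairs.
rewrite nth_cat size_pairs; case: ifP => i_N2; first by rewrite ifT ?nth_pairs //; lia.
rewrite ifF; last lia.
by case: ifP => /eqP i_x; [have -> : i - 2 * N1 - 2 * N2 = 0 | have -> : i - 2 * N1 - 2 * N2 = 1];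
  rewrite //; lia.
Qed.

Definition pairs_mid_entry (f1 g1 f2 g2 : nat -> nat) (N1 x y i : nat) :=
  if i < 2 * N1 then (if odd i then g1 i./2 else f1 i./2)
  else if i == 2 * N1 then x else if i == 2 * N1 + 1 then y
  else (if odd (i - 2 * N1 - 2) then g2 (i - 2 * N1 - 2)./2 else f2 (i - 2 * N1 - 2)./2).

Lemma mkseq_pairs_mid_entry f1 g1 f2 g2 N1 N2 x y :
  pairs f1 g1 0 N1 ++ [:: x; y] ++ pairs f2 g2 0 N2 =
  mkseq (pairs_mid_entry f1 g1 f2 g2 N1 x y) (2 * N1 + 2 + 2 * N2).
Proof.
apply: (@eq_from_nth _ 0); first by rewrite size_mkseq !size_cat !size_pairs /=; lia.
move=> i; rewrite !size_cat !size_pairs /= => lt_i.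
rewrite nth_mkseq; last lia.
rewrite /pairs_mid_entry nth_cat size_pairs.
case: ifP => i_N1; first by rewrite nth_pairs.
case: ifP => /eqP i_x; first by have -> : i - 2 * N1 = 0 by lia.
case: ifP => /eqP i_y; first by have -> : i - 2 * N1 = 1 by lia.
have -> : i - 2 * N1 = (i - 2 * N1 - 2).+2 by lia.
rewrite /= nth_pairs; last lia.
by have -> : (i - 2 * N1 - 2).+2 - 2 = i - 2 * N1 - 2 by lia.
Qed.

Lemma nth_map_iota (f : nat -> nat) N i : i < N -> nth 0 [seq f m | m <- iota 0 N] i = f i.
Proof. by move=> lt_i; rewrite (nth_map 0) ?size_iota // nth_iota. Qed.

Lemma nth_rev_map_iota (f : nat -> nat) N i : i < N ->
  nth 0 (rev [seq f m | m <- iota 0 N]) i = f (N - 1 - i).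
Proof.
move=> lt_i; rewrite nth_rev size_map size_iota // nth_map_iota; last lia.
by congr f; lia.
Qed.

Ltac simpl_ifs := repeat first [ rewrite ifT; [|lia] | rewrite ifF; [|lia] ].
Ltac solve_ifs :=
  simpl_ifs; first [ solve [try rewrite /pair_swap; simpl_ifs; lia] | case: ifP => ?; solve_ifs ].

Lemma modn_offset x y w L : x = y + w * L -> x %% L = y %% L.
Proof. by move->; rewrite addnC modnMDl. Qed.

Definition b1_cyc1 (k : nat) : nat -> nat :=
  pairs_cat_entry (fun m => 2 * m) (fun m => 2 * (2 * m + k - 1)) (fun n => 2 * n + k)
    (fun n => 2 * (2 * n + k)) (k %/ 2) (k %/ 2 - 1) (4 * k - 1) (4 * k - 4).
Definition b1_cyc2 (k : nat) : nat -> nat :=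
  pairs_cat_entry (fun m => 2 * m + 1) (fun m => 2 * (2 * m + k) + 1) (fun n => 2 * n + k + 1)
    (fun n => 2 * (2 * n + k) - 1) (k %/ 2) (k %/ 2 - 1) (4 * k - 2) (4 * k - 5).

Lemma perm_b1E q h : 0 < h -> q = 8 * h ->
  perm_b1 q =1 bicycle (b1_cyc1 (2 * h)) (b1_cyc2 (2 * h)) (4 * h).
Proof.
move=> h_gt0 -> n; rewrite /perm_b1 /cycles /bicycle /= (_ : 8 * h %/ 4 = 2 * h); last lia.
rewrite /cycle_C1 /cycle_C2 !mkseq_pairs_cat_entry.
by congr (cyc (mkseq _ _) (cyc (mkseq _ _) n)); lia.
Qed.

Lemma b1_cyc_bound h i : 1 < h -> i < 4 * h ->
  b1_cyc1 (2 * h) i < 2 * (4 * h) /\ b1_cyc2 (2 * h) i < 2 * (4 * h).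
Proof.
move=> h_gt1 lt_i; rewrite /b1_cyc1 /b1_cyc2 /pairs_cat_entry (_ : 2 * h %/ 2 = h); last lia.
by split; solve_ifs.
Qed.

Lemma b1_cyc_cover h n : 1 < h -> n < 2 * (4 * h) ->
  (exists2 i, i < 4 * h & b1_cyc1 (2 * h) i = n) \/
  (exists2 i, i < 4 * h & b1_cyc2 (2 * h) i = n).
Proof.
move=> h_gt1 lt_n; rewrite /b1_cyc1 /b1_cyc2 /pairs_cat_entry (_ : 2 * h %/ 2 = h); last lia.
case: (boolP (odd n)) => odd_n.
- have [n_lt|n_ge] := ltnP n (4 * h - 2).
    by right; exists (n - 1); [lia | solve_ifs].
  case: (boolP (odd n./2)) => odd_half.
  + have [n_lt'|n_ge'] := ltnP n (8 * h - 5).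
      by right; exists (n./2 + 2); [lia | solve_ifs].
    have [n_lt''|n_ge''] := ltnP n (8 * h - 4).
      by right; exists (4 * h - 1); [lia | solve_ifs].
    by left; exists (4 * h - 2); [lia | solve_ifs].
  + by right; exists (n./2 + 1 - 2 * h); [lia | solve_ifs].
- have [n_lt|n_ge] := ltnP n (4 * h - 2).
    by left; exists n; [lia | solve_ifs].
  case: (boolP (odd n./2)) => odd_half.
  + have [n_lt'|n_ge'] := ltnP n (8 * h - 2).
      by left; exists (n./2 + 2 - 2 * h); [lia | solve_ifs].
    by right; exists (4 * h - 2); [lia | solve_ifs].
  + have [n_lt'|n_ge'] := ltnP n (8 * h - 4).
      by left; exists (n./2 + 1); [lia | solve_ifs].
    by left; exists (4 * h - 1); [lia | solve_ifs].
Qed.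

Lemma pair_swap_b1_cyc1 h i : 1 < h -> i < 4 * h ->
  pair_swap (4 * h) (b1_cyc1 (2 * h) i) = b1_cyc2 (2 * h) ((0 + (2 * h + 1) * i) %% (4 * h)).
Proof.
move=> h_gt1 lt_i; have [t i_t] : exists t, i = 2 * t \/ i = 2 * t + 1 by exists i./2; lia.
have [j [-> j_i]] : exists j, (0 + (2 * h + 1) * i) %% (4 * h) = j /\
    (i = 2 * t /\ j = i \/ i = 2 * t + 1 /\ i < 2 * h /\ j = i + 2 * h \/
     i = 2 * t + 1 /\ 2 * h <= i /\ j = i - 2 * h).
  case: i_t => i_t; first by exists i; rewrite (@modn_offset _ i t) ?modn_small //; nia.
  have [i_lt|i_ge] := ltnP i (2 * h).
    by exists (i + 2 * h); rewrite (@modn_offset _ (i + 2 * h) t) ?modn_small //; nia.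
  by exists (i - 2 * h); rewrite (@modn_offset _ (i - 2 * h) (t + 1)) ?modn_small //; nia.
rewrite /b1_cyc1 /b1_cyc2 /pairs_cat_entry (_ : 2 * h %/ 2 = h); last lia.
by case: j_i => [[? ?]|[[? [? ?]]|[? [? ?]]]]; subst; solve_ifs.
Qed.

Lemma perm_b1_metacyclic q h : q = 8 * h -> 1 < h ->
  metacyclic_relations (perm_a q) (perm_b1 q) (2 * h + 1) (4 * h).
Proof.
move=> q_eq h_gt1; apply: (eq_metacyclic_relations (fsym (perm_b1E (ltnW h_gt1) q_eq))).
rewrite (_ : q = 2 * (4 * h)); last lia.
apply: (pair_swap_bicycle_metacyclic (c := 0)) => [|i|n|i|]; first lia.
- exact: b1_cyc_bound h_gt1.
- exact: b1_cyc_cover h_gt1.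
- exact: pair_swap_b1_cyc1 h_gt1.
- by rewrite (@modn_offset _ 1 (h + 1)) //; nia.
Qed.

Definition b2_cyc1 (k i : nat) := if i < k then 2 * (k - 1 - i) else 2 * k + 2 * (i - k).
Definition b2_cyc2 (k i : nat) := if i < k then 2 * i + 1 else 2 * k + 1 + 2 * (2 * k - 1 - i).

Lemma perm_b2E q h : 0 < h -> q = 8 * h ->
  perm_b2 q =1 bicycle (b2_cyc1 (2 * h)) (b2_cyc2 (2 * h)) (4 * h).
Proof.
move=> h_gt0 -> n; rewrite /perm_b2 /cycles /bicycle /=.
have -> : 8 * h %/ 4 = 2 * h by lia.
have -> : 8 * h %/ 2 = 4 * h by lia.
congr (cyc _ (cyc _ n)); apply: (@eq_from_nth _ 0).
- by rewrite size_mkseq size_cat size_rev !size_map size_iota; lia.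
- move=> i; rewrite size_cat size_rev !size_map size_iota => lt_i.
  rewrite nth_mkseq ?nth_cat ?size_rev ?size_map ?size_iota /b2_cyc1; last lia.
  by case: ifP => i_lt; [rewrite nth_rev_map_iota | rewrite nth_map_iota]; lia.
- by rewrite size_mkseq size_cat size_rev !size_map size_iota; lia.
- move=> i; rewrite size_cat size_rev !size_map size_iota => lt_i.
  rewrite nth_mkseq ?nth_cat ?size_map ?size_iota /b2_cyc2; last lia.
  by case: ifP => i_lt; [rewrite nth_map_iota | rewrite nth_rev_map_iota]; lia.
Qed.

Lemma b2_cyc_bound h i : 1 < h -> i < 4 * h ->
  b2_cyc1 (2 * h) i < 2 * (4 * h) /\ b2_cyc2 (2 * h) i < 2 * (4 * h).
Proof. by move=> h_gt1 lt_i; rewrite /b2_cyc1 /b2_cyc2; split; solve_ifs. Qed.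

Lemma b2_cyc_cover h n : 1 < h -> n < 2 * (4 * h) ->
  (exists2 i, i < 4 * h & b2_cyc1 (2 * h) i = n) \/
  (exists2 i, i < 4 * h & b2_cyc2 (2 * h) i = n).
Proof.
move=> h_gt1 lt_n; rewrite /b2_cyc1 /b2_cyc2.
case: (boolP (odd n)) => odd_n; have [n_lt|n_ge] := ltnP n (4 * h).
- by right; exists n./2; [lia | solve_ifs].
- by right; exists (6 * h - 1 - n./2); [lia | solve_ifs].
- by left; exists (2 * h - 1 - n./2); [lia | solve_ifs].
- by left; exists n./2; [lia | solve_ifs].
Qed.

Lemma pair_swap_b2_cyc1 h i : 1 < h -> i < 4 * h ->
  pair_swap (4 * h) (b2_cyc1 (2 * h) i) =
  b2_cyc2 (2 * h) ((2 * h - 1 + (4 * h - 1) * i) %% (4 * h)).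
Proof.
move=> h_gt1 lt_i.
have [j [-> j_i]] : exists j, (2 * h - 1 + (4 * h - 1) * i) %% (4 * h) = j /\
    (i < 2 * h /\ j = 2 * h - 1 - i \/ 2 * h <= i /\ j = 6 * h - 1 - i).
  have [i_lt|i_ge] := ltnP i (2 * h).
    by exists (2 * h - 1 - i); rewrite (@modn_offset _ (2 * h - 1 - i) i) ?modn_small //; nia.
  by exists (6 * h - 1 - i); rewrite (@modn_offset _ (6 * h - 1 - i) (i - 1)) ?modn_small //; nia.
by rewrite /b2_cyc1 /b2_cyc2; case: j_i => [[? ?]|[? ?]]; subst; solve_ifs.
Qed.

Lemma perm_b2_metacyclic q h : q = 8 * h -> 1 < h ->
  metacyclic_relations (perm_a q) (perm_b2 q) (4 * h - 1) (4 * h).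
Proof.
move=> q_eq h_gt1; apply: (eq_metacyclic_relations (fsym (perm_b2E (ltnW h_gt1) q_eq))).
rewrite (_ : q = 2 * (4 * h)); last lia.
apply: (pair_swap_bicycle_metacyclic (c := 2 * h - 1)) => [|i|n|i|]; first lia.
- exact: b2_cyc_bound h_gt1.
- exact: b2_cyc_cover h_gt1.
- exact: pair_swap_b2_cyc1 h_gt1.
- by rewrite (@modn_offset _ 1 (4 * h - 2)) //; nia.
Qed.

Definition b3_cyc1 (k : nat) : nat -> nat :=
  pairs_mid_entry (fun i => 2 * i) (fun i => 2 * i + 2 * k + 1) (fun j => k + 2 * j + 2)
    (fun j => 3 * k + 2 * j + 2) (k %/ 2) (k + 1) (3 * k).
Definition b3_cyc2 (k : nat) : nat -> nat :=
  pairs_mid_entry (fun j => 3 * k - 2 - 2 * j) (fun j => 2 * k - 1 - 2 * j)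
    (fun i => 4 * k - 1 - 2 * i) (fun i => k - 1 - 2 * i) (k %/ 2 - 1) (2 * k) k.

Lemma perm_b3E q h : 0 < h -> q = 8 * h ->
  perm_b3 q =1 bicycle (b3_cyc1 (2 * h)) (b3_cyc2 (2 * h)) (4 * h).
Proof.
move=> h_gt0 -> n; rewrite /perm_b3 /cycles /bicycle /= (_ : 8 * h %/ 4 = 2 * h); last lia.
rewrite /cycle_D1 /cycle_D2 !mkseq_pairs_mid_entry.
by congr (cyc (mkseq _ _) (cyc (mkseq _ _) n)); lia.
Qed.

Lemma b3_cyc_bound h i : 1 < h -> i < 4 * h ->
  b3_cyc1 (2 * h) i < 2 * (4 * h) /\ b3_cyc2 (2 * h) i < 2 * (4 * h).
Proof.
move=> h_gt1 lt_i; rewrite /b3_cyc1 /b3_cyc2 /pairs_mid_entry (_ : 2 * h %/ 2 = h); last lia.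
by split; solve_ifs.
Qed.

Lemma b3_cyc_cover h n : 1 < h -> n < 2 * (4 * h) ->
  (exists2 i, i < 4 * h & b3_cyc1 (2 * h) i = n) \/
  (exists2 i, i < 4 * h & b3_cyc2 (2 * h) i = n).
Proof.
move=> h_gt1 lt_n; rewrite /b3_cyc1 /b3_cyc2 /pairs_mid_entry (_ : 2 * h %/ 2 = h); last lia.
case: (boolP (odd n)) => odd_n.
- have [n_lt|n_ge] := ltnP n (2 * h); first by right; exists (4 * h - n); [lia | solve_ifs].
  have [n_lt'|n_ge'] := ltnP n (2 * h + 2); first by left; exists (2 * h); [lia | solve_ifs].
  have [n_lt''|n_ge''] := ltnP n (4 * h); first by right; exists (4 * h - n); [lia | solve_ifs].
  have [n_lt3|n_ge3] := ltnP n (6 * h); first by left; exists (n - 4 * h); [lia | solve_ifs].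
  by right; exists (10 * h - 1 - n); [lia | solve_ifs].
- have [n_lt|n_ge] := ltnP n (2 * h); first by left; exists n; [lia | solve_ifs].
  have [n_lt'|n_ge'] := ltnP n (2 * h + 1); first by right; exists (2 * h - 1); [lia | solve_ifs].
  have [n_lt''|n_ge''] := ltnP n (4 * h); first by left; exists n; [lia | solve_ifs].
  have [n_lt3|n_ge3] := ltnP n (4 * h + 1); first by right; exists (2 * h - 2); [lia | solve_ifs].
  have [n_lt4|n_ge4] := ltnP n (6 * h); first by right; exists (6 * h - 2 - n); [lia | solve_ifs].
  have [n_lt5|n_ge5] := ltnP n (6 * h + 1); first by left; exists (2 * h + 1); [lia | solve_ifs].
  by left; exists (n - 4 * h + 1); [lia | solve_ifs].
Qed.

Lemma pair_swap_b3_cyc1 h i : 1 < h -> i < 4 * h ->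
  pair_swap (4 * h) (b3_cyc1 (2 * h) i) =
  b3_cyc2 (2 * h) ((4 * h - 1 + (2 * h - 1) * i) %% (4 * h)).
Proof.
move=> h_gt1 lt_i; have [t i_t] : exists t, i = 2 * t \/ i = 2 * t + 1 by exists i./2; lia.
have [j [-> j_i]] : exists j, (4 * h - 1 + (2 * h - 1) * i) %% (4 * h) = j /\
    (i = 2 * t /\ j = 4 * h - 1 - i \/ i = 2 * t + 1 /\ i < 2 * h /\ j = 2 * h - 1 - i \/
     i = 2 * t + 1 /\ 2 * h <= i /\ j = 6 * h - 1 - i).
  case: i_t => i_t.
    by exists (4 * h - 1 - i); rewrite (@modn_offset _ (4 * h - 1 - i) t) ?modn_small //; nia.
  have [i_lt|i_ge] := ltnP i (2 * h).
    by exists (2 * h - 1 - i); rewrite (@modn_offset _ (2 * h - 1 - i) (t + 1)) ?modn_small //; nia.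
  by exists (6 * h - 1 - i); rewrite (@modn_offset _ (6 * h - 1 - i) t) ?modn_small //; nia.
rewrite /b3_cyc1 /b3_cyc2 /pairs_mid_entry (_ : 2 * h %/ 2 = h); last lia.
by case: j_i => [[? ?]|[[? [? ?]]|[? [? ?]]]]; subst; solve_ifs.
Qed.

Lemma perm_b3_metacyclic q h : q = 8 * h -> 1 < h ->
  metacyclic_relations (perm_a q) (perm_b3 q) (2 * h - 1) (4 * h).
Proof.
move=> q_eq h_gt1; apply: (eq_metacyclic_relations (fsym (perm_b3E (ltnW h_gt1) q_eq))).
rewrite (_ : q = 2 * (4 * h)); last lia.
apply: (pair_swap_bicycle_metacyclic (c := 4 * h - 1)) => [|i|n|i|]; first lia.
- exact: b3_cyc_bound h_gt1.
- exact: b3_cyc_cover h_gt1.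
- exact: pair_swap_b3_cyc1 h_gt1.
- by rewrite (@modn_offset _ 1 (h - 1)) //; nia.
Qed.

(** * The e-Klenian group is abelian *)

Section Klein.
Variables (q l : nat).
Hypothesis l_gt0 : 0 < l.
Local Notation t := (q %/ l).

Let divmodnMD x y : y < l -> (x * l + y) %/ l = x /\ (x * l + y) %% l = y.
Proof. by move=> lt_y; rewrite divnMDl // divn_small // addn0 modnMDl modn_small. Qed.

Let alpha_cycle_div x y : x \in iota (y * l) l -> x %/ l = y.
Proof.
rewrite mem_iota => /andP [ge_x lt_x].
have -> : x = y * l + (x - y * l) by lia.
by case: (@divmodnMD y (x - y * l)) => //; lia.
Qed.

Lemma perm_alphaE n : n < t * l -> perm_alpha q l n = n %/ l * l + (n %% l).+1 %% l.
Proof.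
move=> lt_n; have lt_nl : n %/ l < t by rewrite ltn_divLR.
have lt_ml : n %% l < l by rewrite ltn_mod.
set C := iota (n %/ l * l) l.
have cyc_n : cyc C n = n %/ l * l + (n %% l).+1 %% l.
  have {1}-> : n = nth 0 C (n %% l) by rewrite nth_iota // -divn_eq.
  by rewrite cyc_nth ?iota_uniq ?size_iota // nth_iota // ltn_mod.
rewrite /perm_alpha (@cycles_map_iota (fun i => iota (i * l) l) t (n %/ l) n) //.
  by rewrite mem_iota {1}(divn_eq n l); lia.
move=> y lt_y ne_y; rewrite cyc_n; split; apply/negP => /alpha_cycle_div.
  by move=> eq_y; rewrite eq_y eqxx in ne_y.
case: (@divmodnMD (n %/ l) ((n %% l).+1 %% l)); first by rewrite ltn_mod.
by move=> -> _ eq_y; rewrite eq_y eqxx in ne_y.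
Qed.

Lemma perm_alpha_large n : t * l <= n -> perm_alpha q l n = n.
Proof.
move=> ge_n; apply: cycles_id => C /mapP [i]; rewrite mem_iota => /andP [_ lt_i] ->.
rewrite mem_iota; apply/negP => /andP [_ lt_n].
have : i.+1 * l <= t * l by apply: leq_mul => //; rewrite add0n in lt_i.
by rewrite mulSn; lia.
Qed.

Let beta_cycle j := [seq j + m * l | m <- iota 0 t].

Let beta_cycle_mod j x : j < l -> x \in beta_cycle j -> x %% l = j.
Proof. by move=> lt_j /mapP [m _ ->]; rewrite addnC; case: (@divmodnMD m j). Qed.

Lemma perm_betaE n : n < t * l -> perm_beta q l n = n %% l + (n %/ l).+1 %% t * l.
Proof.
move=> lt_n; have lt_nl : n %/ l < t by rewrite ltn_divLR.
have t_gt0 : 0 < t by lia.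
have lt_ml : n %% l < l by rewrite ltn_mod.
set C := beta_cycle (n %% l).
have C_uniq : uniq C.
  rewrite map_inj_uniq ?iota_uniq // => x y /eqP; rewrite eqn_add2l eqn_mul2r.
  by case/orP => /eqP //; lia.
have size_C : size C = t by rewrite size_map size_iota.
have nth_C i : i < t -> nth 0 C i = n %% l + i * l.
  by move=> lt_i; rewrite (nth_map 0) ?size_iota // nth_iota.
have def_n : n = nth 0 C (n %/ l) by rewrite nth_C // addnC -divn_eq.
have cyc_n : cyc C n = n %% l + (n %/ l).+1 %% t * l.
  by rewrite {1}def_n cyc_nth ?size_C // nth_C // ltn_mod.
have cyc_n_in : cyc C n \in C.
  by rewrite cyc_n; apply/mapP; exists ((n %/ l).+1 %% t); rewrite // mem_iota ltn_mod t_gt0.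
rewrite /perm_beta (@cycles_map_iota beta_cycle l (n %% l) n) //.
  by rewrite {1}def_n mem_nth ?size_C.
move=> y lt_y ne_y; split; apply/negP => /(beta_cycle_mod lt_y) eq_y.
  by rewrite eq_y eqxx in ne_y.
by rewrite (beta_cycle_mod lt_ml cyc_n_in) in eq_y; rewrite eq_y eqxx in ne_y.
Qed.

Lemma perm_beta_large n : t * l <= n -> perm_beta q l n = n.
Proof.
move=> ge_n; apply: cycles_id => C /mapP [j]; rewrite mem_iota => /andP [_ lt_j] ->.
apply/negP => /mapP [m]; rewrite mem_iota => /andP [_ lt_m] def_n.
have : m.+1 * l <= t * l by apply: leq_mul => //; rewrite add0n in lt_m.
by rewrite mulSn; rewrite add0n in lt_j; lia.
Qed.

Lemma perm_alpha_betaC n : perm_alpha q l (perm_beta q l n) = perm_beta q l (perm_alpha q l n).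
Proof.
have [lt_n | ge_n] := ltnP n (t * l); last first.
  by rewrite perm_alpha_large ?perm_beta_large ?perm_alpha_large.
have lt_nl : n %/ l < t by rewrite ltn_divLR.
have lt_ml : n %% l < l by rewrite ltn_mod.
have lt_beta : n %% l + (n %/ l).+1 %% t * l < t * l.
  have : ((n %/ l).+1 %% t).+1 * l <= t * l by apply: leq_mul; rewrite ?ltn_mod; lia.
  by rewrite mulSn; lia.
have lt_alpha : n %/ l * l + (n %% l).+1 %% l < t * l.
  have : (n %/ l).+1 * l <= t * l by apply: leq_mul.
  by have := ltn_mod (n %% l).+1 l; rewrite mulSn; lia.
rewrite perm_betaE // perm_alphaE // perm_alphaE // perm_betaE // [n %% l + _]addnC.
case: (@divmodnMD ((n %/ l).+1 %% t) (n %% l)) => // -> ->.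
case: (@divmodnMD (n %/ l) ((n %% l).+1 %% l)) => [|-> ->]; first by rewrite ltn_mod.
by rewrite addnC.
Qed.

End Klein.

Lemma iter_commute (f g : nat -> nat) : f \o g =1 g \o f ->
  forall i j n, iter i f (iter j g n) = iter j g (iter i f n).
Proof.
move=> fgC i j; elim: i => // i IH n; rewrite !iterS IH.
by elim: j {IH} (iter i f n) => //= j IH m; rewrite -IH -[f (g _)]/((f \o g) _) fgC.
Qed.

Lemma Klein_eltC q l u v u' v' n : 0 < l ->
  Klein_elt q l u v (Klein_elt q l u' v' n) = Klein_elt q l u' v' (Klein_elt q l u v n).
Proof.
move=> l_gt0; have abC := iter_commute (perm_alpha_betaC q l_gt0).
by rewrite /Klein_elt -abC -[in RHS]abC -!iterD addnC [v' + v]addnC.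
Qed.

(** * Metacyclic groups *)

Section Order.
Variable gT : finGroupType.
Local Open Scope group_scope.

Lemma order_exact (x : gT) L :
  0 < L -> x ^+ L = 1 -> (forall t, 0 < t < L -> x ^+ t != 1) -> #[x] = L.
Proof.
move=> L_gt0 xL x_neq1; have dvd_xL : #[x] %| L by rewrite order_dvdn xL.
apply/eqP; rewrite eqn_leq dvdn_leq //= leqNgt; apply/negP => lt_xL.
by have := x_neq1 #[x]; rewrite order_gt0 lt_xL expg_order eqxx => /(_ isT).
Qed.

Lemma expg_eq1_mod (x : gT) n : (x ^+ n == 1) = (n == 0 %[mod #[x]]).
Proof. by rewrite mod0n -order_dvdn. Qed.

End Order.

Section MetacyclicWords.
Variables (gT : finGroupType) (A B : gT) (m : nat).
Local Open Scope group_scope.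
Hypothesis AA : A * A = 1.
Hypothesis ABA : A * B * A = B ^+ m.

Definition metacyclic_word x := exists u (v : bool), x = B ^+ u * (if v then A else 1).

Lemma invA : A^-1 = A.
Proof. by apply/eqP; rewrite eq_invg_mul AA. Qed.

Lemma mulAB : A * B = B ^+ m * A.
Proof. by rewrite -ABA -mulgA AA mulg1. Qed.

Lemma mulA_expB u : A * B ^+ u = B ^+ (m * u) * A.
Proof.
elim: u => [|u IH]; first by rewrite muln0 !expg0 mulg1 mul1g.
by rewrite expgSr mulgA IH -mulgA mulAB mulgA -expgD mulnS addnC.
Qed.

Lemma commute_A_expB u : (A * B ^+ u == B ^+ u * A) = (m * u == u %[mod #[B]]).
Proof. by rewrite mulA_expB (can_eq (mulgK A)) eq_expg_mod_order. Qed.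

Lemma metacyclic_word_mulV x y :
  metacyclic_word x -> metacyclic_word y -> metacyclic_word (x * y^-1).
Proof.
move=> [u [v ->]] [w [z ->]]; rewrite invMg -expgVn (invg_expg B) -expgM.
have -> : (if z then A else 1)^-1 = if z then A else 1 by case: z; rewrite ?invA ?invg1.
set s := (#[B].-1 * w)%N.
case: v; case: z => /=.
- by exists (u + s)%N, false; rewrite mulg1 -mulgA (mulgA A A) AA mul1g expgD.
- by exists (u + m * s)%N, true; rewrite mul1g -mulgA mulA_expB mulgA expgD.
- by exists (u + m * s)%N, true; rewrite mulg1 mulA_expB mulgA expgD.
- by exists (u + s)%N, false; rewrite !mulg1 mul1g expgD.
Qed.

Lemma expB_mulA2 u : (B ^+ u * A) ^+ 2 = B ^+ (u + m * u).
Proof. by rewrite expgS expg1 mulgA -(mulgA _ A) mulA_expB mulgA -mulgA AA mulg1 expgD. Qed.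

Lemma metacyclic_sqr_central x y : odd m -> 2 * m = 2 %[mod #[B]] ->
  metacyclic_word x -> metacyclic_word y -> x ^+ 2 * y = y * x ^+ 2.
Proof.
move=> odd_m m2 [u [v ->]] [w [z ->]].
have [s ->] : exists s, (B ^+ u * (if v then A else 1)) ^+ 2 = B ^+ (2 * s).
  case: v; last by exists u; rewrite mulg1 expgS expg1 -expgD; congr (B ^+ _); lia.
  exists (u * m.+1)./2; rewrite expB_mulA2; congr (B ^+ _).
  by rewrite mul2n halfK -[m]odd_double_half odd_m /=; lia.
case: z; last by rewrite !mulg1 -!expgD addnC.
rewrite mulgA -expgD -mulgA.
have -> : A * B ^+ (2 * s) = B ^+ (2 * s) * A.
  by apply/eqP; rewrite commute_A_expB mulnA [(m * 2)%N]mulnC -modnMml m2 modnMml.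
by rewrite mulgA -expgD addnC.
Qed.

Lemma dihedral_word_trichotomy x y : m.+1 = 0 %[mod #[B]] ->
  metacyclic_word x -> metacyclic_word y -> x ^+ 2 = 1 \/ y ^+ 2 = 1 \/ commute x y.
Proof.
move=> m1 [u [v ->]] [w [z ->]].
have sqr1 t : (B ^+ t * A) ^+ 2 = 1.
  by rewrite expB_mulA2 -mulSn -expg_mod_order -modnMml m1 !mod0n.
case: v; first by left.
case: z; first by right; left.
by right; right; rewrite !mulg1; apply: commuteX2.
Qed.

End MetacyclicWords.
(** * Permutation polynomial tuples *)

Section Tuples.
Variables (q : nat) (F : finFieldType) (c : 'I_q -> F) (d : F -> 'I_q).
Hypotheses (cK : cancel c d) (dK : cancel d c).
Local Open Scope group_scope.
Local Notation rep := (represents d).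

Lemma represents_inj g g' P : rep g P -> rep g' P -> g = g'.
Proof.
move=> gP g'P; apply/permP => x; apply: (can_inj dK); apply: val_inj.
by rewrite /= gP g'P.
Qed.

Lemma eq_represents g P P' : rep g P -> P =1 P' -> rep g P'.
Proof. by move=> gP eqP x; rewrite gP eqP. Qed.

Lemma represents_mul g g' P P' : rep g P -> rep g' P' -> rep (g * g') (P' \o P).
Proof. by move=> gP g'P x; rewrite permM g'P gP. Qed.

Lemma represents1 : rep 1 id.
Proof. by move=> x; rewrite perm1. Qed.

Lemma represents_exp g P n : rep g P -> rep (g ^+ n) (iter n P).
Proof.
move=> gP; elim: n => [|n IH]; first exact: represents1.
by rewrite expgSr; apply: represents_mul.
Qed.

Lemma represents_neq1 g P n : rep g P -> n < q -> P n != n -> g != 1.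
Proof.
move=> gP lt_n; apply: contra => /eqP g1; move: (gP (c (Ordinal lt_n))).
by rewrite g1 perm1 cK /= => <-.
Qed.

Lemma LPP_tuple_uniq f be be' : is_LPP f ->
  Defs.tuple_of c f be -> Defs.tuple_of c f be' -> be =1 be'.
Proof.
move=> [_ f_bij] f_be f_be' i; apply/permP => x.
by apply: (bij_inj (f_bij x)); rewrite f_be f_be'.
Qed.

(* Products in {perm F} compose left to right, so gamma_i = sigma o beta_i o lambda
   reads [la * be i * sg]. *)
Lemma LPP_equivP f g be ga : is_LPP f -> is_LPP g ->
  Defs.tuple_of c f be -> Defs.tuple_of c g ga -> LPP_equiv c f g ->
  exists sg la : {perm F}, forall i, ga i = la * be i * sg.
Proof.
move=> f_LPP g_LPP f_be g_ga [be' [ga' [sg [la [f_be' g_ga' eq_ga]]]]].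
exists sg, la => i; apply/permP => x.
by rewrite !permM (LPP_tuple_uniq g_LPP g_ga g_ga') eq_ga (LPP_tuple_uniq f_LPP f_be f_be').
Qed.

Lemma equiv_tuple_conj (be ga : 'I_q -> {perm F}) (sg la : {perm F}) j :
  (forall i, ga i = la * be i * sg) -> ga j = 1 -> forall i, ga i = (be i * (be j)^-1) ^ la^-1.
Proof.
move=> eq_ga ga_j i; have sgE : sg = (la * be j)^-1.
  by apply/eqP; rewrite eq_sym eq_invg_mul -eq_ga ga_j.
by rewrite conjgE invgK eq_ga sgE invMg !mulgA.
Qed.

Record metacyclic_tuple (be : 'I_q -> {perm F}) (A B : {perm F}) (m L : nat) : Prop :=
  MetacyclicTuple {
  mt_word : forall i, metacyclic_word A B (be i);
  mt_1 : exists i, be i = 1;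
  mt_A : exists i, be i = A;
  mt_B : exists i, be i = B;
  mt_AB : exists i, be i = A * B;
  mt_AA : A * A = 1;
  mt_ABA : A * B * A = B ^+ m;
  mt_order : #[B] = L }.

Lemma Gs_poly_metacyclic b f m L : q = (2 * L)%N -> 1 < L ->
  metacyclic_relations (perm_a q) b m L -> is_Gs_poly c d b f ->
  exists be A B, [/\ is_LPP f, Defs.tuple_of c f be & metacyclic_tuple be A B m L].
Proof.
move=> q_eq L_gt1 [aK conj_b order_b neq_b] [f_LPP [be [f_be [be_in be_onto]]]].
have q2 : (q %/ 2)%N = L by rewrite q_eq mulKn.
have [i1 be_i1] := be_onto 0%N 0%N ltac:(lia) ltac:(lia).
have [iA be_iA] := be_onto 0%N 1%N ltac:(lia) ltac:(lia).
have [iB be_iB] := be_onto 1%N 0%N ltac:(lia) ltac:(lia).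
have [iAB be_iAB] := be_onto 1%N 1%N ltac:(lia) ltac:(lia).
set A := be iA; set B := be iB.
have A_a : rep A (perm_a q) by [].
have B_b : rep B b by [].
have AA : A * A = 1.
  apply: (represents_inj (represents_mul A_a A_a)).
  by apply: eq_represents represents1 _ => n /=; rewrite aK.
have ABA : A * B * A = B ^+ m.
  apply: (represents_inj (represents_mul (represents_mul A_a B_b) A_a)).
  by apply: eq_represents (represents_exp m B_b) _ => n /=; rewrite conj_b.
exists be, A, B; split => //; split => //.
- move=> i; rewrite /metacyclic_word; have [u [[|[|v]] [_ lt_v be_i]]] := be_in i; try lia.
  + exists u, false; rewrite mulg1; exact: represents_inj be_i (represents_exp u B_b).
  + (* [Gs_elt b q u 1] is [b^u o a], the permutation [A * B ^+ u]. *)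
    exists (m * u)%N, true; rewrite -(mulA_expB AA ABA).
    exact: represents_inj be_i (represents_mul A_a (represents_exp u B_b)).
- by exists i1; apply: represents_inj be_i1 represents1.
- by exists iA.
- by exists iB.
- by exists iAB; apply: represents_inj be_iAB (represents_mul A_a B_b).
- apply: order_exact; first lia.
    by apply: (represents_inj (represents_exp L B_b)); apply: eq_represents represents1 _.
  move=> t /neq_b [n lt_n neq_n]; apply: represents_neq1 (represents_exp t B_b) _ neq_n.
  by rewrite q_eq.
Qed.

Lemma Klenian_tuple_commute e g : is_eKlenian c d e g ->
  exists ga, [/\ is_LPP g, Defs.tuple_of c g ga & forall i j, commute (ga i) (ga j)].
Proof.
move=> [g_LPP [ga [g_ga [ga_in _]]]]; exists ga; split => // i j.
have [u [v [_ _ ga_i]]] := ga_in i; have [u' [v' [_ _ ga_j]]] := ga_in j.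
apply: represents_inj (represents_mul ga_i ga_j) _.
by apply: eq_represents (represents_mul ga_j ga_i) _ => n /=; rewrite Klein_eltC ?expn_gt0.
Qed.

Lemma abelian_not_equiv f g be ga A B m L :
  is_LPP f -> is_LPP g -> Defs.tuple_of c f be -> Defs.tuple_of c g ga ->
  metacyclic_tuple be A B m L -> (forall i j, commute (ga i) (ga j)) -> m != 1 %[mod L] ->
  ~ LPP_equiv c f g.
Proof.
move=> f_LPP g_LPP f_be g_ga [_ [i1 be_i1] [iA be_iA] [iB be_iB] _ AA ABA <-] gaC m_neq1 eqv.
have [sg [la eq_ga]] := LPP_equivP f_LPP g_LPP f_be g_ga eqv.
have eq_be i : be i = la^-1 * ga i * sg^-1 by rewrite eq_ga !mulgA mulVg mul1g mulgK.
have conj_be := equiv_tuple_conj eq_be be_i1.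
have gaVC i j : commute (ga i * (ga i1)^-1) (ga j * (ga i1)^-1).
  apply: commuteM; apply/commute_sym; apply: commuteM.
  - exact: gaC.
  - exact/commuteV/gaC.
  - exact/commute_sym/commuteV/gaC.
  - exact: commute_refl.
move: m_neq1; rewrite -[m]muln1 -(commute_A_expB AA ABA) expg1.
by rewrite -be_iA -be_iB !conj_be -!conjMg gaVC eqxx.
Qed.

Lemma sqr_central_not_equiv f g be ga A B A' B' m L m' L' :
  is_LPP f -> is_LPP g -> Defs.tuple_of c f be -> Defs.tuple_of c g ga ->
  metacyclic_tuple be A B m L -> metacyclic_tuple ga A' B' m' L' ->
  odd m -> 2 * m = 2 %[mod L] -> 2 * m' != 2 %[mod L'] -> ~ LPP_equiv c f g.
Proof.
move=> f_LPP g_LPP f_be g_ga [be_word _ _ _ _ AA ABA <-].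
move=> [_ [j1 ga_j1] [iA ga_iA] [iB ga_iB] _ AA' ABA' <-] odd_m m2 m2' eqv.
have [sg [la eq_ga]] := LPP_equivP f_LPP g_LPP f_be g_ga eqv.
have conj_ga := equiv_tuple_conj eq_ga ga_j1.
have word i := metacyclic_word_mulV AA ABA (be_word i) (be_word j1).
move: m2'; rewrite mulnC -(commute_A_expB AA' ABA').
rewrite -ga_iA -ga_iB !conj_ga -conjXg -!conjMg.
by rewrite (metacyclic_sqr_central AA ABA odd_m m2 (word iB) (word iA)) eqxx.
Qed.

Lemma dihedral_not_equiv f g be ga A B A' B' m L m' L' :
  is_LPP f -> is_LPP g -> Defs.tuple_of c f be -> Defs.tuple_of c g ga ->
  metacyclic_tuple be A B m L -> metacyclic_tuple ga A' B' m' L' -> m.+1 = 0 %[mod L] ->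
  m'.+1 != 0 %[mod L'] -> 2 != 0 %[mod L'] -> m' != 1 %[mod L'] -> ~ LPP_equiv c f g.
Proof.
move=> f_LPP g_LPP f_be g_ga [be_word _ _ _ _ AA ABA <-].
move=> [_ [j1 ga_j1] _ [iB ga_iB] [iAB ga_iAB] AA' ABA' <-] m1 m1' two m'_neq1 eqv.
have [sg [la eq_ga]] := LPP_equivP f_LPP g_LPP f_be g_ga eqv.
have conj_ga := equiv_tuple_conj eq_ga ga_j1.
have word i := metacyclic_word_mulV AA ABA (be_word i) (be_word j1).
have sqrAB' : (A' * B') ^+ 2 = B' ^+ m'.+1 by rewrite expgS expg1 mulgA ABA' -expgSr.
case: (dihedral_word_trichotomy AA ABA m1 (word iAB) (word iB)) => [x2 | [y2 | xyC]].
- have /eqP : (A' * B') ^+ 2 = 1 by rewrite -ga_iAB conj_ga -conjXg x2 conj1g.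
  by rewrite sqrAB' expg_eq1_mod (negbTE m1').
- have /eqP : B' ^+ 2 = 1 by rewrite -ga_iB conj_ga -conjXg y2 conj1g.
  by rewrite expg_eq1_mod (negbTE two).
- have : commute (A' * B') B' by rewrite -ga_iAB -ga_iB /commute !conj_ga -!conjMg xyC.
  rewrite /commute mulgA => /mulIg /eqP.
  by rewrite -{1}(expg1 B') (commute_A_expB AA' ABA') muln1 (negbTE m'_neq1).
Qed.

End Tuples.

Lemma G1_congruences h : 1 < h ->
  [/\ odd (2 * h + 1), 2 * (2 * h + 1) = 2 %[mod 4 * h] & 2 * h + 1 != 1 %[mod 4 * h]].
Proof.
move=> h_gt1; split; first by rewrite addn1 /= mul2n odd_double.
  by rewrite (@modn_offset _ 2 1); lia.
by rewrite !modn_small; lia.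
Qed.

Lemma G2_congruences h : 1 < h ->
  [/\ (4 * h - 1).+1 = 0 %[mod 4 * h], 2 * (4 * h - 1) != 2 %[mod 4 * h]
    & 4 * h - 1 != 1 %[mod 4 * h]].
Proof.
move=> h_gt1; split; first by rewrite (_ : (4 * h - 1).+1 = 4 * h) ?modnn ?mod0n //; lia.
  by rewrite (@modn_offset _ (4 * h - 2) 1) ?modn_small; lia.
by rewrite !modn_small; lia.
Qed.

Lemma G3_congruences h : 1 < h ->
  [/\ (2 * h - 1).+1 != 0 %[mod 4 * h], 2 != 0 %[mod 4 * h],
    2 * (2 * h - 1) != 2 %[mod 4 * h] & 2 * h - 1 != 1 %[mod 4 * h]].
Proof. by move=> h_gt1; split; rewrite ?mod0n !modn_small; lia. Qed.

Theorem theorem3p5 (r : nat) (F : finFieldType)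
    (c : 'I_(2 ^ r) -> F) (d : F -> 'I_(2 ^ r))
    (cK : cancel c d) (dK : cancel d c)
    (f1 f2 f3 : F -> F -> F) :
  4 <= r ->
  is_Gs_poly c d (perm_b1 (2 ^ r)) f1 ->
  is_Gs_poly c d (perm_b2 (2 ^ r)) f2 ->
  is_Gs_poly c d (perm_b3 (2 ^ r)) f3 ->
  (forall e, e < r -> forall g, is_eKlenian c d e g ->
     [/\ ~ LPP_equiv c f1 g, ~ LPP_equiv c f2 g & ~ LPP_equiv c f3 g])
  /\ [/\ ~ LPP_equiv c f1 f2, ~ LPP_equiv c f1 f3 & ~ LPP_equiv c f2 f3].
Proof.
move=> r_ge4 f1_G1 f2_G2 f3_G3; set h := 2 ^ (r - 3).
have h_gt1 : 1 < h by rewrite /h -[X in X < _](expn0 2) ltn_exp2l; lia.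
have q_eq : 2 ^ r = 8 * h by rewrite /h (_ : 8 = 2 ^ 3) // -expnD subnKC //; lia.
have q_2L : 2 ^ r = 2 * (4 * h) by lia.
have L_gt1 : 1 < 4 * h by lia.
have [be1 [A1 [B1 [f1_LPP f1_be G1]]]] :=
  Gs_poly_metacyclic cK dK q_2L L_gt1 (perm_b1_metacyclic q_eq h_gt1) f1_G1.
have [be2 [A2 [B2 [f2_LPP f2_be G2]]]] :=
  Gs_poly_metacyclic cK dK q_2L L_gt1 (perm_b2_metacyclic q_eq h_gt1) f2_G2.
have [be3 [A3 [B3 [f3_LPP f3_be G3]]]] :=
  Gs_poly_metacyclic cK dK q_2L L_gt1 (perm_b3_metacyclic q_eq h_gt1) f3_G3.
have [odd_m1 m1_sqr m1_neq1] := G1_congruences h_gt1.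
have [m2_dih m2_sqr m2_neq1] := G2_congruences h_gt1.
have [m3_dih two_neq0 m3_sqr m3_neq1] := G3_congruences h_gt1.
split.
  move=> e _ g /(Klenian_tuple_commute dK) [ga [g_LPP g_ga gaC]].
  split; [exact: abelian_not_equiv f1_LPP g_LPP f1_be g_ga G1 gaC m1_neq1
         | exact: abelian_not_equiv f2_LPP g_LPP f2_be g_ga G2 gaC m2_neq1
         | exact: abelian_not_equiv f3_LPP g_LPP f3_be g_ga G3 gaC m3_neq1].
split; first exact: sqr_central_not_equiv f1_LPP f2_LPP f1_be f2_be G1 G2 odd_m1 m1_sqr m2_sqr.
  exact: sqr_central_not_equiv f1_LPP f3_LPP f1_be f3_be G1 G3 odd_m1 m1_sqr m3_sqr.
exact: dihedral_not_equiv f2_LPP f3_LPP f2_be f3_be G2 G3 m2_dih m3_dih two_neq0 m3_neq1.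
Qed.
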